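(* Let $\mathbb{C}$ be a locally small category and $\mathbb{C}_{\mathit{fin}}$ a full subcategory satisfying (C1)–(C5) below. Let $\mathbb{A}$ be a full subcategory of $\mathbb{C}_{\mathit{fin}}$ and let $F\in\mathrm{Ob}(\mathbb{C})$ be universal and locally finite for $\mathbb{A}$. If $\mathbb{A}$ has finite Ramsey degrees, then for every $A\in\mathrm{Ob}(\mathbb{A})$ there exists an essential coloring $\gamma_A:\hom(A,F)\to\{0,\dots,t_{\mathbb{A}}(A)-1\}$.
   Context: Write $A\to B$ if $\hom(A,B)\ne\varnothing$. Conditions: (C1) all morphisms of $\mathbb{C}$ are monomorphisms; (C2) $\mathrm{Ob}(\mathbb{C}_{\mathit{fin}})$ is a set; (C3) $\hom(A,B)$ is finite for $A,B\in\mathrm{Ob}(\mathbb{C}_{\mathit{fin}})$; (C4) for every $F\in\mathrm{Ob}(\mathbb{C})$ there is $A\in\mathrm{Ob}(\mathbb{C}_{\mathit{fin}})$ with $A\to F$; (C5) for every $B\in\mathrm{Ob}(\mathbb{C}_{\mathit{fin}})$ the set $\{A\in\mathrm{Ob}(\mathbb{C}_{\mathit{fin}}):A\to B\}$ is finite. $F$ is universal for $\mathbb{A}$ if $A\to F$ for all $A\in\mathrm{Ob}(\mathbb{A})$. $F$ is locally finite for $\mathbb{A}$ if for all $A,B\in\mathrm{Ob}(\mathbb{A})$, $e\in\hom(A,F)$, $f\in\hom(B,F)$ there exist $D\in\mathrm{Ob}(\mathbb{A})$, $r\in\hom(D,F)$, $p\in\hom(A,D)$, $q\in\hom(B,D)$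 with $r\cdot p=e$, $r\cdot q=f$, such that for every $H\in\mathrm{Ob}(\mathbb{C})$, $r'\in\hom(H,F)$, $p'\in\hom(A,H)$, $q'\in\hom(B,H)$ with $r'\cdot p'=e$, $r'\cdot q'=f$ there is $s\in\hom(D,H)$ with $r'\cdot s=r$, $s\cdot p=p'$, $s\cdot q=q'$. $C\to(B)^A_{k,t}$ means that for every $\chi:\hom(A,C)\to\{0,\dots,k-1\}$ there is $w\in\hom(B,C)$ with $|\chi(w\cdot\hom(A,B))|\le t$. $t_{\mathbb{A}}(A)$ is the least positive $n$ such that for all $k\ge2$ and all $B\in\mathrm{Ob}(\mathbb{A})$ there is $C\in\mathrm{Ob}(\mathbb{A})$ with $C\to(B)^A_{k,n}$, and $\infty$ otherwise; $\mathbb{A}$ has finite Ramsey degrees if $t_{\mathbb{A}}(A)<\infty$ for all $A$. For $\chi:\hom(A,F)\to\{0,\dots,k-1\}$ and $w\in\hom(B,F)$, $\chi^{(w)}(f)=\chi(w\cdot f)$; $\ker g=\{(x,y):g(x)=g(y)\}$. For a positive integer $t$, a coloring $\lambda:\hom(A,B)\to\{0,\dots,t-1\}$ is essential at $B$ if for every $k\ge2$ and every $\chi:\hom(A,F)\to\{0,\dots,k-1\}$ there is $w\in\hom(B,F)$ with $\ker\lambda\subseteq\ker\chi^{(w)}$; a coloring $\gamma:\hom(A,F)\to\{0,\dots,t-1\}$ is essential if $\gamma^{(w)}$ is essential at $B$ for every $B\in\mathrm{Ob}(\mathbb{A})$ with $A\to B$ and every $w\in\hom(B,F)$. *)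

From Stdlib Require Import List Arith.
Import ListNotations.

Set Implicit Arguments.
Unset Strict Implicit.

Record Category := {
  Ob :> Type;
  Hom : Ob -> Ob -> Type;
  idm : forall A, Hom A A;
  comp : forall A B C, Hom B C -> Hom A B -> Hom A C;
  comp_assoc : forall A B C D (h : Hom C D) (g : Hom B C) (f : Hom A B),
      comp h (comp g f) = comp (comp h g) f;
  comp_id_l : forall A B (f : Hom A B), comp (idm B) f = f;
  comp_id_r : forall A B (f : Hom A B), comp f (idm A) = f
}.

Arguments Hom {C} : rename.
Arguments idm {C} : rename.
Arguments comp {C} {A B C0} : rename.

Definition arrow (C : Category) (A B : Ob C) : Prop := inhabited (Hom A B).

Definition finite_type (T : Type) : Prop := exists l : list T, forall x, In x l.

Definition is_mono (C : Category) (A B : Ob C) (h : Hom A B) : Prop :=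
  forall X (f g : Hom X A), comp h f = comp h g -> f = g.

(* Full subcategories are given by predicates on objects. *)
Definition C1 (C : Category) : Prop :=
  forall (A B : Ob C) (h : Hom A B), is_mono h.
(* (C2) "Ob(C_fin) is a set" is automatic: Cfin is a predicate on the type Ob C. *)
Definition C3 (C : Category) (Cfin : Ob C -> Prop) : Prop :=
  forall A B : Ob C, Cfin A -> Cfin B -> finite_type (Hom A B).
Definition C4 (C : Category) (Cfin : Ob C -> Prop) : Prop :=
  forall F : Ob C, exists A : Ob C, Cfin A /\ arrow A F.
Definition C5 (C : Category) (Cfin : Ob C -> Prop) : Prop :=
  forall B : Ob C, Cfin B ->
    exists l : list (Ob C), forall A : Ob C, Cfin A -> arrow A B -> In A l.

Definition universal (C : Category) (Aob : Ob C -> Prop) (F : Ob C) : Prop :=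
  forall A : Ob C, Aob A -> arrow A F.

Definition locally_finite (C : Category) (Aob : Ob C -> Prop) (F : Ob C) : Prop :=
  forall (A B : Ob C), Aob A -> Aob B ->
  forall (e : Hom A F) (f : Hom B F),
  exists (D : Ob C) (r : Hom D F) (p : Hom A D) (q : Hom B D),
    Aob D /\ comp r p = e /\ comp r q = f /\
    forall (H : Ob C) (r' : Hom H F) (p' : Hom A H) (q' : Hom B H),
      comp r' p' = e -> comp r' q' = f ->
      exists s : Hom D H, comp r' s = r /\ comp s p = p' /\ comp s q = q'.

Definition coloring (X : Type) (k : nat) (chi : X -> nat) : Prop :=
  forall x, chi x < k.

Definition ramsey_arrow (C : Category) (Cc B A : Ob C) (k t : nat) : Prop :=
  forall chi : Hom A Cc -> nat, coloring k chi ->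
  exists w : Hom B Cc,
    exists l : list nat, length l <= t /\ forall f : Hom A B, In (chi (comp w f)) l.

(* the property whose least positive witness is t_A(A) *)
Definition ramsey_bound (C : Category) (Aob : Ob C -> Prop) (A : Ob C) (n : nat) : Prop :=
  forall k, 2 <= k -> forall B : Ob C, Aob B ->
    exists Cc : Ob C, Aob Cc /\ ramsey_arrow Cc B A k n.

Definition ramsey_degree_is (C : Category) (Aob : Ob C -> Prop) (A : Ob C) (t : nat) : Prop :=
  0 < t /\ ramsey_bound Aob A t /\ forall n, 0 < n -> ramsey_bound Aob A n -> t <= n.

Definition finite_ramsey_degrees (C : Category) (Aob : Ob C -> Prop) : Prop :=
  forall A : Ob C, Aob A -> exists n, 0 < n /\ ramsey_bound Aob A n.

Definition recolor (C : Category) (A B F : Ob C) (chi : Hom A F -> nat) (w : Hom B F)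
  : Hom A B -> nat := fun f => chi (comp w f).

Definition essential_at (C : Category) (F A B : Ob C) (t : nat) (lam : Hom A B -> nat) : Prop :=
  coloring t lam /\
  forall k, 2 <= k -> forall chi : Hom A F -> nat, coloring k chi ->
    exists w : Hom B F,
      forall x y : Hom A B, lam x = lam y -> recolor chi w x = recolor chi w y.

Definition essential (C : Category) (Aob : Ob C -> Prop) (F A : Ob C) (t : nat)
  (gam : Hom A F -> nat) : Prop :=
  coloring t gam /\
  forall B : Ob C, Aob B -> arrow A B -> forall w : Hom B F,
    @essential_at C F A B t (recolor gam w).

(** For a single [D] in [A] there are only finitely many [t]-colorings of
    [hom(A,D)].  If none were essential at [D], the colorings [chi] witnessing
    this could be merged into one; a Ramsey object for [D], embedded in the
    universal [F], gives [w : D -> F] on which the merged coloring takes at most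
    [t] values, and recording which value is taken is a [t]-coloring that
    defeats its own witness.  Local finiteness amalgamates finitely many maps
    [B_i -> F] through one [r : D -> F]; as [r] is mono, an essential coloring
    at [D] transports along [r] to a coloring of [hom(A,F)] essential at every
    [B_i].  Each essentiality constraint only reads finitely many values, so a
    compactness argument (Zorn's lemma on partial colorings) glues these finite
    solutions into one essential coloring. *)
From Stdlib Require Import List Arith Lia Classical ClassicalEpsilon FunctionalExtensionality.
From mathcomp Require Import classical_sets.
Import ListNotations.
Local Open Scope classical_set_scope.

Definition refines {X : Type} (c d : X -> nat) : Prop :=
  forall x y, c x = c y -> d x = d y.

Lemma refines_trans {X : Type} {c d e : X -> nat} :
  refines c d -> refines d e -> refines c e.
Proof. intros Hcd Hde x y E. apply Hde, Hcd, E. Qed.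

Lemma pair_code_inj k a b a' b' :
  a < k -> a' < k -> a + k * b = a' + k * b' -> a = a' /\ b = b'.
Proof.
  intros Ha Ha' E.
  assert (b = b') as <- by (destruct (Nat.lt_trichotomy b b') as [H|[H|H]]; nia).
  lia.
Qed.

Lemma common_refinement {X Y : Type} (P : Y -> (X -> nat) -> Prop) (ys : list Y) :
  (forall y, In y ys -> exists k chi, 2 <= k /\ coloring k chi /\ P y chi) ->
  exists K chi, 2 <= K /\ coloring K chi /\
    forall y, In y ys -> exists chi', P y chi' /\ refines chi chi'.
Proof.
  induction ys as [|y0 ys IH]; intros Hys.
  - exists 2, (fun _ => 0). split; [lia|]. split; [intro; lia|]. intros y [].
  - destruct IH as [K [chi [HK [Hchi Hys']]]]; [intros y Hy; apply Hys; right; exact Hy|].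
    destruct (Hys y0 (or_introl eq_refl)) as [k [chi0 [Hk [Hchi0 HP0]]]].
    assert (Hinj : forall x x', chi0 x + k * chi x = chi0 x' + k * chi x' ->
                                chi0 x = chi0 x' /\ chi x = chi x').
    { intros x x'. apply pair_code_inj; apply Hchi0. }
    exists (k * K), (fun x => chi0 x + k * chi x). split; [nia|]. split.
    + intro x. specialize (Hchi0 x). specialize (Hchi x). nia.
    + intros y [<-|Hy].
      * exists chi0. split; [exact HP0|]. intros x x' E. apply (Hinj x x' E).
      * destruct (Hys' y Hy) as [chi' [HP Hr]]. exists chi'. split; [exact HP|].
        intros x x' E. apply Hr, (Hinj x x' E).
Qed.

Lemma colorings_agreeing_on_list {X : Type} (t : nat) (L : list X) :
  exists fs : list (X -> nat), forall c, coloring t c ->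
    exists f, In f fs /\ forall x, In x L -> c x = f x.
Proof.
  induction L as [|a L [fs Hfs]].
  - exists [fun _ => 0]. intros c _. exists (fun _ => 0).
    split; [left; reflexivity | intros x []].
  - set (upd := fun (f : X -> nat) (j : nat) (y : X) =>
                  if excluded_middle_informative (y = a) then j else f y).
    exists (flat_map (fun f => map (upd f) (seq 0 t)) fs).
    intros c Hc. destruct (Hfs c Hc) as [f [Hf Hcf]].
    exists (upd f (c a)). split.
    + apply in_flat_map. exists f. split; [exact Hf|].
      apply in_map, in_seq. specialize (Hc a). lia.
    + intros x Hx. unfold upd.
      destruct excluded_middle_informative as [->|ne]; [reflexivity|].
      destruct Hx as [<-|Hx]; [contradiction|]. apply Hcf, Hx.
Qed.

Lemma colorings_enumerable {X : Type} (t : nat) :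
  finite_type X -> exists fs : list (X -> nat), forall c, coloring t c -> In c fs.
Proof.
  intros [L HL]. destruct (colorings_agreeing_on_list t L) as [fs Hfs].
  exists fs. intros c Hc. destruct (Hfs c Hc) as [f [Hf Hcf]].
  replace c with f; [exact Hf|].
  apply functional_extensionality. intro x. symmetry. apply Hcf, HL.
Qed.

Fixpoint index_of (v : nat) (l : list nat) : nat :=
  match l with
  | [] => 0
  | a :: l => if Nat.eqb a v then 0 else S (index_of v l)
  end.

Lemma index_of_lt v l : In v l -> index_of v l < length l.
Proof.
  induction l as [|a l IH]; simpl; [tauto|]. intros [<-|H].
  - rewrite Nat.eqb_refl. lia.
  - destruct (Nat.eqb a v); [lia|]. specialize (IH H). lia.
Qed.

Lemma nth_index_of v l : In v l -> nth (index_of v l) l 0 = v.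
Proof.
  induction l as [|a l IH]; simpl; [tauto|]. intros [<-|H].
  - rewrite Nat.eqb_refl. reflexivity.
  - destruct (Nat.eqb a v) eqn:E; [apply Nat.eqb_eq, E|]. apply IH, H.
Qed.

Lemma palette_refinement {X : Type} (c : X -> nat) (l : list nat) :
  (forall x, In (c x) l) ->
  coloring (length l) (fun x => index_of (c x) l) /\ refines (fun x => index_of (c x) l) c.
Proof.
  intros Hl. split.
  - intro x. apply index_of_lt, Hl.
  - intros x y E. rewrite <- (nth_index_of _ _ (Hl x)), <- (nth_index_of _ _ (Hl y)), E.
    reflexivity.
Qed.

Lemma chain_traps_list {T : Type} (F : set (set T)) (Lp : list T) :
  total_on F subset ->
  (forall p, In p Lp -> ~ (\bigcup_(G in F) G) p) \/
  exists G0, F G0 /\ forall p, In p Lp -> (\bigcup_(G in F) G) p -> G0 p.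
Proof.
  intros Htot. induction Lp as [|a Lp IH].
  - left. intros p [].
  - destruct (classic ((\bigcup_(G in F) G) a)) as [[Ga FGa Gaa]|Na].
    + right. destruct IH as [Hnone|[G0 [FG0 HG0]]].
      * exists Ga. split; [exact FGa|]. intros p [<-|Hp] Hu; [exact Gaa|].
        destruct (Hnone p Hp Hu).
      * destruct (Htot Ga G0 FGa FG0) as [Hsub|Hsub].
        -- exists G0. split; [exact FG0|]. intros p [<-|Hp] Hu; [apply Hsub, Gaa|].
           apply HG0; assumption.
        -- exists Ga. split; [exact FGa|]. intros p [<-|Hp] Hu; [exact Gaa|].
           apply Hsub, HG0; assumption.
    + destruct IH as [Hnone|[G0 [FG0 HG0]]].
      * left. intros p [<-|Hp]; [exact Na|]. apply Hnone, Hp.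
      * right. exists G0. split; [exact FG0|]. intros p [<-|Hp] Hu; [contradiction|].
        apply HG0; assumption.
Qed.

Section Compactness.

Context {X I : Type} (t : nat) (Sat : I -> (X -> nat) -> Prop).
Hypothesis Sat_local : forall i, exists L : list X,
  forall c c', (forall x, In x L -> c x = c' x) -> Sat i c -> Sat i c'.
Hypothesis Sat_finitely : forall Ks : list I,
  exists c, coloring t c /\ forall i, In i Ks -> Sat i c.

Definition extendable (G : set (X * nat)) : Prop :=
  forall (Ks : list I) (Lp : list (X * nat)), exists c, coloring t c /\
    (forall i, In i Ks -> Sat i c) /\ forall p, In p Lp -> G p -> c (fst p) = snd p.

Lemma extendable_bigcup (F : set (set (X * nat))) :
  F `<=` extendable -> total_on F subset -> extendable (\bigcup_(G in F) G).
Proof.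
  intros HF Htot Ks Lp.
  destruct (chain_traps_list F Lp Htot) as [Hnone|[G0 [FG0 HG0]]].
  - destruct (Sat_finitely Ks) as [c [Hc HKs]]. exists c. split; [exact Hc|].
    split; [exact HKs|]. intros p Hp Hu. destruct (Hnone p Hp Hu).
  - destruct (HF G0 FG0 Ks Lp) as [c [Hc [HKs HLp]]]. exists c. split; [exact Hc|].
    split; [exact HKs|]. intros p Hp Hu. apply HLp, HG0; assumption.
Qed.

Lemma extendable_add_point (G : set (X * nat)) (x : X) :
  extendable G -> exists j, extendable (fun p => G p \/ p = (x, j)).
Proof.
  intros HG. apply NNPP. intros Hno.
  (* Otherwise each value [j < t] at [x] is ruled out by finitely many constraints, and
     all of them together rule out every value of [c x]. *)
  assert (Hfail : forall j, exists Ks Lp, forall c, coloring t c ->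
    (forall i, In i Ks -> Sat i c) -> (forall p, In p Lp -> G p -> c (fst p) = snd p) ->
    c x <> j).
  { intros j. apply NNPP. intros Hj. apply Hno. exists j. intros Ks Lp.
    apply NNPP. intros Hc. apply Hj. exists Ks, Lp. intros c Hct HKs HLp Hcx.
    apply Hc. exists c. split; [exact Hct|]. split; [exact HKs|].
    intros p Hp [HGp| ->]; [apply HLp; assumption | exact Hcx]. }
  assert (Hbelow : forall n, exists Ks Lp, forall c, coloring t c ->
    (forall i, In i Ks -> Sat i c) -> (forall p, In p Lp -> G p -> c (fst p) = snd p) ->
    n <= c x).
  { induction n as [|n [Ks [Lp IH]]].
    - exists [], []. intros; lia.
    - destruct (Hfail n) as [Ks' [Lp' Hn]]. exists (Ks ++ Ks'), (Lp ++ Lp').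
      intros c Hct HKs HLp.
      assert (n <= c x).
      { apply IH; [exact Hct | |]; intros; [apply HKs | apply HLp];
          auto using in_or_app. }
      assert (c x <> n).
      { apply Hn; [exact Hct | |]; intros; [apply HKs | apply HLp];
          auto using in_or_app. }
      lia. }
  destruct (Hbelow t) as [Ks [Lp Ht]]. destruct (HG Ks Lp) as [c [Hct [HKs HLp]]].
  specialize (Ht c Hct HKs HLp). specialize (Hct x). lia.
Qed.

Lemma extendable_maximal_total (G : set (X * nat)) :
  extendable G -> (forall G', G `<` G' -> ~ extendable G') -> forall x, exists v, G (x, v).
Proof.
  intros HG Hmax x. destruct (extendable_add_point G x HG) as [j Hj].
  exists j. apply NNPP. intros Hn. refine (Hmax _ _ Hj). split.
  - intros p Hp. left. exact Hp.
  - intros Hsub. apply Hn, Hsub. right. reflexivity.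
Qed.

Theorem coloring_compactness : exists c, coloring t c /\ forall i, Sat i c.
Proof.
  destruct (Zorn_bigcup extendable_bigcup) as [G [HG Hmax]].
  pose proof (extendable_maximal_total G HG Hmax) as Htot.
  set (c := fun x => proj1_sig (constructive_indefinite_description _ (Htot x))).
  assert (HcG : forall x, G (x, c x)).
  { intro x. unfold c. destruct constructive_indefinite_description as [v Hv]. exact Hv. }
  exists c. split.
  - intro x. destruct (HG [] [(x, c x)]) as [c' [Hc' [_ Hagree]]].
    specialize (Hagree (x, c x) (or_introl eq_refl) (HcG x)). simpl in Hagree.
    rewrite <- Hagree. apply Hc'.
  - intro i. destruct (Sat_local i) as [L HL].
    destruct (HG [i] (map (fun x => (x, c x)) L)) as [c' [_ [Hi Hagree]]].
    apply (HL c'); [| apply Hi; left; reflexivity].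
    intros x Hx. apply (Hagree (x, c x)); [|apply HcG].
    apply (in_map (fun y => (y, c y))), Hx.
Qed.

End Compactness.

Lemma essential_at_precomp {C : Category} {F A B D : Ob C} {t : nat}
  {lam : Hom A D -> nat} (v : Hom B D) :
  essential_at F t lam -> essential_at F t (fun f => lam (comp v f)).
Proof.
  intros [Hlam Hess]. split; [intro f; apply Hlam|].
  intros k Hk chi Hchi. destruct (Hess k Hk chi Hchi) as [w Hw].
  exists (comp w v). intros x y E. unfold recolor. rewrite <- !comp_assoc.
  exact (Hw _ _ E).
Qed.

Lemma recolor_local {C : Category} {A B F : Ob C} {w : Hom B F} {lB : list (Hom A B)}
  {c c' : Hom A F -> nat} :
  (forall f, In f lB) -> (forall x, In x (map (fun f => comp w f) lB) -> c x = c' x) ->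
  recolor c w = recolor c' w.
Proof.
  intros HlB Hcc. apply functional_extensionality. intro f.
  apply Hcc, (in_map (fun f => comp w f)), HlB.
Qed.

Lemma extend_along_mono {C : Category} {A D F : Ob C} {r : Hom D F} {t : nat}
  {lam : Hom A D -> nat} :
  is_mono r -> 0 < t -> coloring t lam ->
  exists c : Hom A F -> nat, coloring t c /\ forall g, c (comp r g) = lam g.
Proof.
  intros Hr Ht Hlam.
  exists (fun x => match excluded_middle_informative (exists g, comp r g = x) with
                   | left H => lam (proj1_sig (constructive_indefinite_description _ H))
                   | right _ => 0
                   end).
  split.
  - intro x. destruct excluded_middle_informative; [apply Hlam | exact Ht].
  - intro g. destruct excluded_middle_informative as [H|H];
      [|exfalso; apply H; exists g; reflexivity].
    destruct constructive_indefinite_description as [g' Hg']. simpl.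
    f_equal. apply Hr, Hg'.
Qed.

Section EssentialColorings.

Context {C : Category} {Aob : Ob C -> Prop} {F A : Ob C} {t : nat}.
Hypothesis hU : universal Aob F.
Hypothesis hLF : locally_finite Aob F.
Hypothesis hRB : ramsey_bound Aob A t.

Lemma ramsey_bound_universal (D : Ob C) (K : nat) (chi : Hom A F -> nat) :
  Aob D -> 2 <= K -> coloring K chi ->
  exists (w : Hom D F) (l : list nat), length l <= t /\ forall g, In (chi (comp w g)) l.
Proof.
  intros HD HK Hchi. destruct (hRB K HK D HD) as [Cc [HCc Harrow]].
  destruct (hU Cc HCc) as [u].
  destruct (Harrow (recolor chi u) (fun f => Hchi _)) as [w [l [Hl Hin]]].
  exists (comp u w), l. split; [exact Hl|]. intro g. rewrite <- comp_assoc. apply Hin.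
Qed.

Lemma essential_at_exists (D : Ob C) :
  Aob D -> finite_type (Hom A D) -> exists lam : Hom A D -> nat, essential_at F t lam.
Proof.
  intros HD HfinD. destruct (colorings_enumerable t HfinD) as [fs Hfs].
  apply NNPP. intros Hnone.
  assert (Hbad : forall f, In f fs -> exists k (chi : Hom A F -> nat), 2 <= k /\
                   coloring k chi /\
                   (coloring t f -> forall w : Hom D F, ~ refines f (recolor chi w))).
  { intros f _. destruct (classic (coloring t f)) as [Hf|Hf].
    2: { exists 2, (fun _ => 0). split; [lia|]. split; [intro; lia | contradiction]. }
    apply NNPP. intros Hno. apply Hnone. exists f. split; [exact Hf|].
    intros k Hk chi Hchi. apply NNPP. intros Hw. apply Hno.
    exists k, chi. split; [exact Hk|]. split; [exact Hchi|]. intros _ w Hr. apply Hw.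
    exists w. exact Hr. }
  destruct (common_refinement _ fs Hbad) as [K [chi [HK [Hchi Hrefines]]]].
  destruct (ramsey_bound_universal D K chi HD HK Hchi) as [w [l [Hl Hin]]].
  destruct (palette_refinement (recolor chi w) l Hin) as [Hlam Hlam_chi].
  set (lam := fun g => index_of (recolor chi w g) l) in *.
  assert (Hlamt : coloring t lam) by (intro g; specialize (Hlam g); lia).
  destruct (Hrefines lam (Hfs lam Hlamt)) as [chi' [Hbad' Hchi']].
  apply (Hbad' Hlamt w). apply (refines_trans Hlam_chi).
  intros x y E. apply Hchi', E.
Qed.

Lemma amalgamate_list (D0 : Ob C) (r0 : Hom D0 F) (ws : list {B : Ob C & Hom B F}) :
  Aob D0 -> exists (D : Ob C) (r : Hom D F), Aob D /\
    forall i, In i ws -> Aob (projT1 i) -> exists v, comp r v = projT2 i.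
Proof.
  intros HD0. induction ws as [|[B w] ws [D [r [HD Hws]]]].
  - exists D0, r0. split; [exact HD0|]. intros i [].
  - destruct (classic (Aob B)) as [HB|HB].
    + destruct (hLF B D HB HD w r) as [D' [r' [p [q [HD' [Ep [Eq _]]]]]]].
      exists D', r'. split; [exact HD'|]. intros i [<-|Hi] HiB; [exists p; exact Ep|].
      destruct (Hws i Hi HiB) as [v Ev]. exists (comp q v).
      rewrite comp_assoc, Eq. exact Ev.
    + exists D, r. split; [exact HD|].
      intros i [<-|Hi] HiB; [contradiction | exact (Hws i Hi HiB)].
Qed.

Hypothesis hC1 : C1 C.
Hypothesis hfin : forall D, Aob D -> finite_type (Hom A D).

Lemma essential_colorings_finitely (ws : list {B : Ob C & Hom B F}) :
  Aob A -> 0 < t -> exists c : Hom A F -> nat, coloring t c /\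
    forall i, In i ws -> Aob (projT1 i) -> essential_at F t (recolor c (projT2 i)).
Proof.
  intros HA Ht. destruct (hU A HA) as [r0].
  destruct (amalgamate_list A r0 ws HA) as [D [r [HD Hws]]].
  destruct (essential_at_exists D HD (hfin D HD)) as [lam Hlam].
  destruct (extend_along_mono (hC1 _ _ r) Ht (proj1 Hlam)) as [c [Hc Hcr]].
  exists c. split; [exact Hc|]. intros [B w] Hi HB. destruct (Hws _ Hi HB) as [v <-].
  replace (recolor c (comp r v)) with (fun f => lam (comp v f)).
  - apply essential_at_precomp, Hlam.
  - apply functional_extensionality. intro f. unfold recolor. rewrite <- comp_assoc, Hcr.
    reflexivity.
Qed.

End EssentialColorings.

Theorem proposition3p6 (C : Category) (Cfin : Ob C -> Prop)
  (hC1 : C1 C) (hC3 : C3 Cfin) (hC4 : C4 Cfin) (hC5 : C5 Cfin)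
  (Aob : Ob C -> Prop) (hA : forall X : Ob C, Aob X -> Cfin X)
  (F : Ob C) (hU : universal Aob F) (hLF : locally_finite Aob F)
  (hR : finite_ramsey_degrees Aob) :
  forall A : Ob C, Aob A -> forall t : nat, ramsey_degree_is Aob A t ->
    exists gam : Hom A F -> nat, @essential C Aob F A t gam.
Proof.
  intros A HA t [Ht [hRB _]].
  assert (hfin : forall B, Aob B -> finite_type (Hom A B))
    by (intros B HB; apply hC3; apply hA; assumption).
  destruct (coloring_compactness t
              (fun (i : {B : Ob C & Hom B F}) (c : Hom A F -> nat) =>
                 Aob (projT1 i) -> essential_at F t (recolor c (projT2 i))))
    as [gam [Hgam Hess]].
  - intros [B w]. destruct (classic (Aob B)) as [HB|HB];
      [|exists []; intros c c' _ _ HB'; contradiction].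
    destruct (hfin B HB) as [lB HlB]. exists (map (fun f => comp w f) lB).
    intros c c' Hcc Hc HB'. simpl in *. rewrite <- (recolor_local HlB Hcc). apply Hc, HB'.
  - intros ws. apply (essential_colorings_finitely hU hLF hRB hC1 hfin ws HA Ht).
  - exists gam. split; [exact Hgam|]. intros B HB _ w. exact (Hess (existT _ B w) HB).
Qed.
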